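(* Let $f$ be a transcendental meromorphic function projectable via $\exp_1$, and $\ell\in\mathbb{Z}$ with $f(z+1)=f(z)+\ell$. Suppose $z^*$ is a pseudoperiodic point of $f$ of minimal type $(p,\sigma)$, $p\ge1$, $\sigma\in\mathbb{Z}$, and let $z^*_k=z^*+k$, $k\in\mathbb{Z}$. Then: (i) If $|\ell|\ge2$, the points $z^*_k$ are pseudoperiodic of minimal type $(p,\sigma+(\ell^p-1)k)$, and for all $m\in\mathbb{N}$, $f^{mp}(z^*_k)=z^*_k+(\ell^{mp}-1)(k-\delta)$ where $\delta=\frac{\sigma}{1-\ell^p}$. In particular $f^{mp}(z^*_k)\to\infty$ as $m\to\infty$, except for $z^*_\delta$ when $\delta\in\mathbb{Z}$ (which is $p$-periodic). (ii) If $\ell=1$, or $\ell=-1$ with $p$ even, the points $z^*_k$ are pseudoperiodic of minimal type $(p,\sigma)$ and $f^{mp}(z^*_k)=z^*_k+m\sigma$ for all $m\in\mathbb{N}$. In particular $f^{mp}(z^*_k)\to\infty$ as $m\to\infty$ unless $\sigma=0$ (in which case each $z^*_k$ is $p$-periodic). (iii) If $\ell=-1$ with $p$ odd, the points $z^*_k$ are pseudoperiodic of minimal type $(p,\sigma-2k)$; in particular each $z^*_k$ is $2p$-periodic, except $z^*_{\sigma/2}$ when $\sigma/2\in\mathbb{Z}$ (which is $p$-periodic). (iv) If $\ell=0$, the point $z^*_\sigma$ is $p$-periodic and $f(z^*_k)=z^*_\sigma$ for all $k\in\mathbb{Z}$.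
   Context: $\exp_1(z)=e^{2\pi iz}$; $f$ is projectable via $\exp_1$ if there is $g$ with $g\circ\exp_1=\exp_1\circ f$ wherever defined. A point $z^*\in\mathbb{C}\setminus f^{-1}(\infty)$ is pseudoperiodic of type $(p,\sigma)$ if $f^p(z^* )=z^*+\sigma$ ($p\ge1$, $\sigma\in\mathbb{Z}$); of minimal type if $p$ is the smallest such natural number. ''$p$-periodic'' means of minimal period $p$. *)

From Stdlib Require Import Reals ZArith List.
From Coquelicot Require Import Coquelicot.
Open Scope C_scope.

Definition Cz (k : Z) : C := RtoC (IZR k).

(* exp_1(z) = e^{2 pi i z}, written out via real exp/cos/sin *)
Definition exp1 (z : C) : C :=
  (exp (- (2 * PI * Im z)) * cos (2 * PI * Re z),
   exp (- (2 * PI * Im z)) * sin (2 * PI * Re z))%R.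

(* A function C -> C u {oo}; [None] stands for the value oo (a pole). *)

Definition holo_at (f : C -> option C) (z0 : C) : Prop :=
  exists (r : posreal) (g : C -> C),
    (forall z, (Cmod (z - z0) < r)%R -> f z = Some (g z)) /\
    @ex_derive C_AbsRing C_NormedModule g z0.

Definition pole_at (f : C -> option C) (z0 : C) : Prop :=
  f z0 = None /\
  (exists r : posreal, forall z, z <> z0 -> (Cmod (z - z0) < r)%R -> f z <> None) /\
  (forall M : R, exists d : posreal, forall z w,
      z <> z0 -> (Cmod (z - z0) < d)%R -> f z = Some w -> (M < Cmod w)%R).

Definition meromorphic (f : C -> option C) : Prop :=
  forall z0, holo_at f z0 \/ pole_at f z0.

(* polynomial evaluation, coefficients in increasing degree *)
Definition peval (l : list C) (z : C) : C :=
  fold_right (fun a acc => a + z * acc) 0 l.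

Definition is_rational (f : C -> option C) : Prop :=
  exists P Q : list C, (exists c, In c Q /\ c <> 0) /\
    forall z, peval Q z <> 0 -> f z = Some (peval P z / peval Q z).

Definition transcendental_meromorphic (f : C -> option C) : Prop :=
  meromorphic f /\ ~ is_rational f.

Definition projectable_exp1 (f : C -> option C) : Prop :=
  exists g : C -> C, forall z w, f z = Some w -> g (exp1 z) = exp1 w.

Fixpoint fiter (f : C -> option C) (n : nat) (z : C) : option C :=
  match n with
  | O => Some z
  | S n' => match fiter f n' z with Some w => f w | None => None end
  end.

Definition pseudoperiodic (f : C -> option C) (z : C) (p : nat) (s : Z) : Prop :=
  f z <> None /\ (1 <= p)%nat /\ fiter f p z = Some (z + Cz s).

Definition minimal_pseudoperiodic (f : C -> option C) (z : C) (p : nat) (s : Z) : Prop :=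
  pseudoperiodic f z p s /\
  forall (q : nat) (s' : Z), (1 <= q < p)%nat -> ~ pseudoperiodic f z q s'.

Definition periodic_point (f : C -> option C) (z : C) (p : nat) : Prop :=
  (1 <= p)%nat /\ fiter f p z = Some z /\
  forall q : nat, (1 <= q < p)%nat -> fiter f q z <> Some z.

Definition tends_to_inf (u : nat -> option C) : Prop :=
  forall M : R, exists N : nat, forall m : nat, (N <= m)%nat ->
    exists w, u m = Some w /\ (M < Cmod w)%R.

From Stdlib Require Import Reals ZArith List Lia Lra.
From Coquelicot Require Import Coquelicot.
Open Scope C_scope.

(* From f(z + 1) = f(z) + l one gets f^n(z + k) = f^n(z) + l^n k for every integer k.
   Hence on the lattice zs + Z the map f^p acts as the integer affine map
   a |-> σ + l^p a: every z_k is pseudoperiodic of type (p, σ + (l^p - 1) k), a return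
   of z_k to the lattice in fewer than p steps would give one of zs, and f^(mp)(z_k) is
   zs plus the m-th affine iterate of k.  When l^p <> 1 these iterates form a geometric
   progression around the fixed point δ = σ / (1 - l^p); when l^p = 1 an arithmetic one
   with step σ. *)

Lemma Cz_add (a b : Z) : Cz (a + b) = Cz a + Cz b.
Proof. unfold Cz; rewrite plus_IZR; apply RtoC_plus. Qed.

Lemma Cz_sub (a b : Z) : Cz (a - b) = Cz a - Cz b.
Proof. unfold Cz; rewrite minus_IZR; apply RtoC_minus. Qed.

Lemma Cz_mul (a b : Z) : Cz (a * b) = Cz a * Cz b.
Proof. unfold Cz; rewrite mult_IZR; apply RtoC_mult. Qed.

Lemma Cz_0 : Cz 0 = 0.
Proof. reflexivity. Qed.

Lemma Cz_1 : Cz 1 = 1.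
Proof. reflexivity. Qed.

Lemma Cz_inj (a b : Z) : Cz a = Cz b -> a = b.
Proof. intro E; apply (f_equal fst) in E; now apply eq_IZR. Qed.

Lemma Cz_sub_1_neq0 (L : Z) : L <> 1%Z -> 1 - Cz L <> 0.
Proof.
  intros HL E; apply HL, Cz_inj.
  rewrite Cz_1; replace (Cz L) with (1 - (1 - Cz L)) by ring; rewrite E; ring.
Qed.

Lemma Cz_eq_div_iff (s L k : Z) :
  L <> 1%Z -> Cz k = Cz s / (1 - Cz L) <-> (s + (L - 1) * k = 0)%Z.
Proof.
  intros HL; pose proof (Cz_sub_1_neq0 L HL) as HL'.
  split; intro E.
  - apply Cz_inj; rewrite Cz_add, Cz_mul, Cz_sub, Cz_1, Cz_0, E; field; exact HL'.
  - apply (f_equal Cz) in E; rewrite Cz_add, Cz_mul, Cz_sub, Cz_1, Cz_0 in E.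
    replace (Cz s) with (Cz s + (Cz L - 1) * Cz k - (Cz L - 1) * Cz k) by ring.
    rewrite E; field; exact HL'.
Qed.

Lemma Zpow_minus1 (n : nat) : ((-1) ^ Z.of_nat n = if Nat.even n then 1 else -1)%Z.
Proof.
  induction n as [|n IH]; [reflexivity|].
  rewrite Nat2Z.inj_succ, Z.pow_succ_r, IH, Nat.even_succ, <- Nat.negb_even by lia.
  now destruct (Nat.even n).
Qed.

Lemma Zpow_abs_ge (L : Z) (m : nat) :
  (2 <= Z.abs L)%Z -> (Z.of_nat m + 1 <= Z.abs (L ^ Z.of_nat m))%Z.
Proof.
  intros HL; induction m as [|m IH]; [simpl; lia|].
  rewrite Nat2Z.inj_succ, Z.pow_succ_r, Z.abs_mul by lia; nia.
Qed.

Definition Zdiverges (a : nat -> Z) : Prop :=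
  forall K : Z, exists N : nat, forall m : nat, (N <= m)%nat -> (K <= Z.abs (a m))%Z.

Lemma Zdiverges_of_linear_bound (a : nat -> Z) (B c : Z) :
  (0 < B)%Z -> (forall m, Z.of_nat m - c <= B * Z.abs (a m))%Z -> Zdiverges a.
Proof.
  intros HB Ha K; exists (Z.to_nat (B * Z.abs K + c)); intros m Hm.
  specialize (Ha m); nia.
Qed.

Definition affine_iter (s L : Z) (m : nat) (k : Z) : Z :=
  Nat.iter m (fun a => s + L * a)%Z k.

Lemma affine_iter_S (s L k : Z) (m : nat) :
  affine_iter s L (S m) k = (s + L * affine_iter s L m k)%Z.
Proof. reflexivity. Qed.

Lemma affine_iter_conj (s L k : Z) (m : nat) :
  (affine_iter s L m k * (L - 1) + s = L ^ Z.of_nat m * (s + (L - 1) * k))%Z.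
Proof.
  induction m as [|m IH].
  - change (affine_iter s L 0 k) with k; rewrite Z.pow_0_r; ring.
  - rewrite affine_iter_S, Nat2Z.inj_succ, Z.pow_succ_r, <- Z.mul_assoc, <- IH by lia.
    ring.
Qed.

Lemma affine_iter_1 (s k : Z) (m : nat) : affine_iter s 1 m k = (k + Z.of_nat m * s)%Z.
Proof.
  induction m as [|m IH]; [change (affine_iter s 1 0 k) with k; ring|].
  rewrite affine_iter_S, IH, Nat2Z.inj_succ; ring.
Qed.

Lemma Cz_affine_iter (s L k : Z) (m : nat) :
  L <> 1%Z ->
  Cz (affine_iter s L m k)
  = Cz k + (Cz (L ^ Z.of_nat m) - 1) * (Cz k - Cz s / (1 - Cz L)).
Proof.
  intros HL; pose proof (Cz_sub_1_neq0 L HL) as HL'.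
  assert (HL'' : Cz L - 1 <> 0)
    by (intro E; apply HL'; replace (1 - Cz L) with (- (Cz L - 1)) by ring; rewrite E; ring).
  pose proof (f_equal Cz (affine_iter_conj s L k m)) as E.
  rewrite Cz_add, !Cz_mul, Cz_add, Cz_mul, !Cz_sub, Cz_1 in E.
  replace (Cz (affine_iter s L m k))
    with ((Cz (affine_iter s L m k) * (Cz L - 1) + Cz s - Cz s) / (Cz L - 1))
    by (field; exact HL'').
  rewrite E; field; auto.
Qed.

Lemma affine_iter_diverges (s L k : Z) :
  (2 <= Z.abs L)%Z -> (s + (L - 1) * k <> 0)%Z ->
  Zdiverges (fun m => affine_iter s L m k).
Proof.
  intros HL Hc; apply (Zdiverges_of_linear_bound _ (Z.abs (L - 1)) (Z.abs s)); [lia|].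
  intro m; pose proof (affine_iter_conj s L k m) as E.
  pose proof (Zpow_abs_ge L m HL) as Hpow.
  set (a := affine_iter s L m k) in *; set (P := (L ^ Z.of_nat m)%Z) in *.
  set (c := (s + (L - 1) * k)%Z) in *.
  assert (Habs : (Z.abs (L - 1) * Z.abs a = Z.abs (P * c - s))%Z)
    by (rewrite <- Z.abs_mul; f_equal; lia).
  rewrite Habs; pose proof (Z.abs_mul P c); nia.
Qed.

Lemma affine_iter_1_diverges (s k : Z) :
  s <> 0%Z -> Zdiverges (fun m => affine_iter s 1 m k).
Proof.
  intros Hs; apply (Zdiverges_of_linear_bound _ 1 (Z.abs k)); [lia|].
  intro m; rewrite affine_iter_1; pose proof (Z.abs_mul (Z.of_nat m) s); nia.
Qed.

Lemma tends_to_inf_of_Zdiverges (z : C) (u : nat -> option C) (a : nat -> Z) :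
  (forall m, u m = Some (z + Cz (a m))) -> Zdiverges a -> tends_to_inf u.
Proof.
  intros Hu Ha M; destruct (Ha (up (M + Cmod z))) as [N HN]; exists N.
  intros m Hm; exists (z + Cz (a m)); split; [apply Hu|].
  specialize (HN m Hm); destruct (archimed (M + Cmod z)) as [Hup _].
  apply IZR_le in HN; rewrite abs_IZR in HN.
  assert (Htri : (Cmod (Cz (a m)) <= Cmod (z + Cz (a m)) + Cmod (- z))%R)
    by (replace (Cz (a m)) with ((z + Cz (a m)) + - z) at 1 by ring; apply Cmod_triangle).
  unfold Cz in *; rewrite Cmod_R, Cmod_opp in Htri; lra.
Qed.

Lemma fiter_add (f : C -> option C) (n m : nat) (z : C) :
  fiter f (n + m) z = match fiter f n z with Some w => fiter f m w | None => None end.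
Proof.
  induction m as [|m IH].
  - rewrite Nat.add_0_r; now destruct (fiter f n z).
  - rewrite Nat.add_succ_r; simpl; rewrite IH; now destruct (fiter f n z).
Qed.

Section Translation.

Variables (f : C -> option C) (l : Z).
Hypothesis f_add1 : forall z, f (z + 1) = option_map (fun w => w + Cz l) (f z).

Lemma f_add_Cz (j : Z) (z : C) :
  f (z + Cz j) = option_map (fun w => w + Cz (l * j)) (f z).
Proof.
  revert z; induction j as [|j IH|j IH] using Z.peano_ind; intro z.
  - rewrite Z.mul_0_r, Cz_0, Cplus_0_r.
    destruct (f z); cbn [option_map]; f_equal; ring.
  - replace (z + Cz (Z.succ j)) with ((z + Cz j) + 1)
      by (rewrite <- Z.add_1_r, Cz_add, Cz_1; ring).
    rewrite f_add1, IH; destruct (f z); cbn [option_map]; f_equal.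
    rewrite Z.mul_succ_r, Cz_add; ring.
  - specialize (IH z).
    replace (z + Cz j) with ((z + Cz (Z.pred j)) + 1) in IH
      by (rewrite <- (Z.succ_pred j) at 2; rewrite <- Z.add_1_r, Cz_add, Cz_1; ring).
    rewrite f_add1 in IH.
    destruct (f (z + Cz (Z.pred j))) as [w|], (f z) as [v|]; cbn [option_map] in *;
      try discriminate; [|reflexivity].
    assert (Hw : w + Cz l = v + Cz (l * j)) by congruence; f_equal.
    replace w with ((w + Cz l) - Cz l) by ring.
    rewrite Hw, Z.mul_pred_r, Cz_sub; ring.
Qed.

Lemma fiter_add_Cz (n : nat) (j : Z) (z : C) :
  fiter f n (z + Cz j) = option_map (fun w => w + Cz (l ^ Z.of_nat n * j)) (fiter f n z).
Proof.
  induction n as [|n IH]; simpl fiter.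
  - now rewrite Z.pow_0_r, Z.mul_1_l.
  - rewrite IH; destruct (fiter f n z) as [w|]; cbn [option_map]; [|reflexivity].
    rewrite f_add_Cz; destruct (f w); cbn [option_map]; [|reflexivity].
    rewrite Nat2Z.inj_succ, Z.pow_succ_r by lia; do 3 f_equal; ring.
Qed.

Section MinimalOrbit.

Variables (zs : C) (p : nat) (s : Z).
Hypothesis zs_min : minimal_pseudoperiodic f zs p s.

Local Notation L := (l ^ Z.of_nat p)%Z.

Lemma period_ge1 : (1 <= p)%nat.
Proof. exact (proj1 (proj2 (proj1 zs_min))). Qed.

Lemma fiter_period_shift (k : Z) :
  fiter f p (zs + Cz k) = Some (zs + Cz k + Cz (s + (L - 1) * k)).
Proof.
  destruct zs_min as [[_ [_ Hp]] _].
  rewrite fiter_add_Cz, Hp; simpl; f_equal.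
  rewrite Cz_add, !Cz_mul, Cz_sub, Cz_1; ring.
Qed.

Lemma no_return_before_period (q : nat) (j j' : Z) :
  (1 <= q < p)%nat -> fiter f q (zs + Cz j) <> Some (zs + Cz j').
Proof.
  intros Hq E; rewrite fiter_add_Cz in E.
  destruct (fiter f q zs) as [w|] eqn:Ew; simpl in E; [|discriminate].
  assert (Hw : w + Cz (l ^ Z.of_nat q * j) = zs + Cz j') by congruence.
  apply (proj2 zs_min q (j' - l ^ Z.of_nat q * j)%Z Hq).
  split; [exact (proj1 (proj1 zs_min)) | split; [lia|]].
  rewrite Ew; f_equal.
  replace w with ((w + Cz (l ^ Z.of_nat q * j)) - Cz (l ^ Z.of_nat q * j)) by ring.
  rewrite Hw, Cz_sub; ring.
Qed.

Lemma minimal_pseudoperiodic_shift (k : Z) :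
  minimal_pseudoperiodic f (zs + Cz k) p (s + (L - 1) * k).
Proof.
  destruct zs_min as [[Hf0 _] _].
  split; [split; [|split; [exact period_ge1 | apply fiter_period_shift]]|].
  - rewrite f_add_Cz; destruct (f zs); simpl; congruence.
  - intros q s' Hq [_ [_ E]].
    apply (no_return_before_period q k (k + s') Hq).
    rewrite E, Cz_add; f_equal; ring.
Qed.

Lemma periodic_point_shift (k : Z) :
  (s + (L - 1) * k = 0)%Z -> periodic_point f (zs + Cz k) p.
Proof.
  intros Hk; split; [exact period_ge1 | split].
  - rewrite fiter_period_shift, Hk, Cz_0; f_equal; ring.
  - intros q Hq; exact (no_return_before_period q k k Hq).
Qed.

Lemma periodic_point_swap (k j : Z) :
  j <> k ->
  fiter f p (zs + Cz k) = Some (zs + Cz j) ->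
  fiter f p (zs + Cz j) = Some (zs + Cz k) ->
  periodic_point f (zs + Cz k) (2 * p).
Proof.
  intros Hjk Hk Hj; pose proof period_ge1 as Hp.
  split; [lia | split].
  - replace (2 * p)%nat with (p + p)%nat by lia; now rewrite fiter_add, Hk.
  - intros q Hq E; destruct (Nat.lt_trichotomy q p) as [Hlt | [-> | Hgt]].
    + exact (no_return_before_period q k k (conj (proj1 Hq) Hlt) E).
    + rewrite Hk in E; assert (Ej : zs + Cz j = zs + Cz k) by congruence.
      apply Hjk, Cz_inj; replace (Cz j) with (zs + Cz j - zs) by ring; rewrite Ej; ring.
    + replace q with (p + (q - p))%nat in E by lia; rewrite fiter_add, Hk in E.
      apply (no_return_before_period (q - p) j k); [lia | exact E].
Qed.

Lemma fiter_mul_period (k : Z) (m : nat) :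
  fiter f (m * p) (zs + Cz k) = Some (zs + Cz (affine_iter s L m k)).
Proof.
  induction m as [|m IH]; [reflexivity|].
  rewrite Nat.mul_succ_l, fiter_add, IH, fiter_period_shift, affine_iter_S; f_equal.
  rewrite !Cz_add, !Cz_mul, Cz_sub, Cz_1; ring.
Qed.

Lemma pseudoperiodic_shift_expanding :
  (2 <= Z.abs l)%Z ->
  let delta := Cz s / (1 - Cz L) in
  (forall k : Z, minimal_pseudoperiodic f (zs + Cz k) p (s + (L - 1) * k)%Z) /\
  (forall (k : Z) (m : nat),
     fiter f (m * p) (zs + Cz k)
     = Some (zs + Cz k + (Cz (l ^ Z.of_nat (m * p)) - 1) * (Cz k - delta))) /\
  (forall k : Z, Cz k <> delta -> tends_to_inf (fun m => fiter f (m * p) (zs + Cz k))) /\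
  (forall k : Z, Cz k = delta -> periodic_point f (zs + Cz k) p).
Proof.
  intros Hl delta.
  assert (HL : (2 <= Z.abs L)%Z) by (pose proof (Zpow_abs_ge l p Hl); pose proof period_ge1; lia).
  assert (HL1 : L <> 1%Z) by lia.
  split; [|split; [|split]].
  - exact minimal_pseudoperiodic_shift.
  - intros k m; rewrite fiter_mul_period, Cz_affine_iter by exact HL1; f_equal.
    replace (Z.of_nat (m * p)) with (Z.of_nat p * Z.of_nat m)%Z by lia.
    rewrite Z.pow_mul_r by lia; unfold delta; ring.
  - intros k Hk; apply (tends_to_inf_of_Zdiverges zs _ (fun m => affine_iter s L m k)).
    + intro m; apply fiter_mul_period.
    + apply affine_iter_diverges; [exact HL|].
      intro E; apply Hk, Cz_eq_div_iff; assumption.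
  - intros k Hk; apply periodic_point_shift, (Cz_eq_div_iff s L k HL1), Hk.
Qed.

Lemma pseudoperiodic_shift_unimodular :
  (l = 1%Z \/ (l = (-1)%Z /\ Nat.even p = true)) ->
  (forall k : Z, minimal_pseudoperiodic f (zs + Cz k) p s) /\
  (forall (k : Z) (m : nat),
     fiter f (m * p) (zs + Cz k) = Some (zs + Cz k + Cz (Z.of_nat m * s))) /\
  (s <> 0%Z -> forall k : Z, tends_to_inf (fun m => fiter f (m * p) (zs + Cz k))) /\
  (s = 0%Z -> forall k : Z, periodic_point f (zs + Cz k) p).
Proof.
  intros Hl.
  assert (HL : L = 1%Z).
  { destruct Hl as [-> | [-> He]]; [apply Z.pow_1_l; lia|].
    now rewrite Zpow_minus1, He. }
  split; [|split; [|split]].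
  - intro k; generalize (minimal_pseudoperiodic_shift k).
    now rewrite HL, Z.sub_diag, Z.mul_0_l, Z.add_0_r.
  - intros k m; rewrite fiter_mul_period, HL, affine_iter_1, Cz_add; f_equal; ring.
  - intros Hs k; apply (tends_to_inf_of_Zdiverges zs _ (fun m => affine_iter s L m k)).
    + intro m; apply fiter_mul_period.
    + rewrite HL; exact (affine_iter_1_diverges s k Hs).
  - intros Hs k; apply periodic_point_shift; rewrite HL; lia.
Qed.

Lemma pseudoperiodic_shift_reversing :
  (l = (-1)%Z /\ Nat.odd p = true) ->
  (forall k : Z, minimal_pseudoperiodic f (zs + Cz k) p (s - 2 * k)%Z) /\
  (forall k : Z, s <> (2 * k)%Z -> periodic_point f (zs + Cz k) (2 * p)) /\
  (forall k : Z, s = (2 * k)%Z -> periodic_point f (zs + Cz k) p).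
Proof.
  intros [Hl Ho].
  assert (HL : L = (-1)%Z) by now rewrite Hl, Zpow_minus1, <- Nat.negb_odd, Ho.
  assert (Hstep : forall j, fiter f p (zs + Cz j) = Some (zs + Cz (s - j))).
  { intro j; rewrite fiter_period_shift, HL; f_equal.
    replace (s + (-1 - 1) * j)%Z with (s - j - j)%Z by ring; rewrite !Cz_sub; ring. }
  split; [|split].
  - intro k; generalize (minimal_pseudoperiodic_shift k).
    now rewrite HL; replace (s + (-1 - 1) * k)%Z with (s - 2 * k)%Z by ring.
  - intros k Hk; apply (periodic_point_swap k (s - k)); [lia | apply Hstep|].
    rewrite Hstep; do 3 f_equal; ring.
  - intros k Hk; apply periodic_point_shift; rewrite HL; lia.
Qed.

Lemma pseudoperiodic_shift_degenerate :
  l = 0%Z ->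
  periodic_point f (zs + Cz s) p /\
  forall k : Z, fiter f p (zs + Cz k) = Some (zs + Cz s).
Proof.
  intros Hl.
  assert (HL : L = 0%Z) by (pose proof period_ge1; rewrite Hl; apply Z.pow_0_l; lia).
  split.
  - apply periodic_point_shift; rewrite HL; ring.
  - intro k; rewrite fiter_period_shift, HL, Cz_add, Cz_mul, Cz_sub, Cz_0, Cz_1; f_equal; ring.
Qed.

End MinimalOrbit.

End Translation.

Theorem proposition4p4 (f : C -> option C) (l : Z) (zs : C) (p : nat) (s : Z) :
  transcendental_meromorphic f ->
  projectable_exp1 f ->
  (forall z, f (z + 1) = option_map (fun w => w + Cz l) (f z)) ->
  minimal_pseudoperiodic f zs p s ->
  (* (i) *)
  ((2 <= Z.abs l)%Z ->
     let delta := Cz s / (1 - Cz (l ^ Z.of_nat p)) in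
     (forall k : Z,
        minimal_pseudoperiodic f (zs + Cz k) p (s + (l ^ Z.of_nat p - 1) * k)%Z) /\
     (forall (k : Z) (m : nat),
        fiter f (m * p) (zs + Cz k)
        = Some (zs + Cz k + (Cz (l ^ Z.of_nat (m * p)) - 1) * (Cz k - delta))) /\
     (forall k : Z, Cz k <> delta ->
        tends_to_inf (fun m => fiter f (m * p) (zs + Cz k))) /\
     (forall k : Z, Cz k = delta -> periodic_point f (zs + Cz k) p)) /\
  (* (ii) *)
  ((l = 1%Z \/ (l = (-1)%Z /\ Nat.even p = true)) ->
     (forall k : Z, minimal_pseudoperiodic f (zs + Cz k) p s) /\
     (forall (k : Z) (m : nat),
        fiter f (m * p) (zs + Cz k) = Some (zs + Cz k + Cz (Z.of_nat m * s))) /\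
     (s <> 0%Z -> forall k : Z,
        tends_to_inf (fun m => fiter f (m * p) (zs + Cz k))) /\
     (s = 0%Z -> forall k : Z, periodic_point f (zs + Cz k) p)) /\
  (* (iii) *)
  ((l = (-1)%Z /\ Nat.odd p = true) ->
     (forall k : Z, minimal_pseudoperiodic f (zs + Cz k) p (s - 2 * k)%Z) /\
     (forall k : Z, s <> (2 * k)%Z -> periodic_point f (zs + Cz k) (2 * p)) /\
     (forall k : Z, s = (2 * k)%Z -> periodic_point f (zs + Cz k) p)) /\
  (* (iv) *)
  (l = 0%Z ->
     periodic_point f (zs + Cz s) p /\
     forall k : Z, fiter f p (zs + Cz k) = Some (zs + Cz s)).
Proof.
  intros _ _ f_add1 zs_min.
  split; [|split; [|split]].
  - exact (pseudoperiodic_shift_expanding f l f_add1 zs p s zs_min).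
  - exact (pseudoperiodic_shift_unimodular f l f_add1 zs p s zs_min).
  - exact (pseudoperiodic_shift_reversing f l f_add1 zs p s zs_min).
  - exact (pseudoperiodic_shift_degenerate f l f_add1 zs p s zs_min).
Qed.
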